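(* Let $U\subseteq\mathbb R^2$ be a convex region and let $b$ be a line segment disjoint from $U$. Let $\varepsilon\ge 0$ and suppose the set $A:=\{\alpha\in[0,2\pi) : U(\alpha)\cap b(\alpha)\neq\emptyset\}$ has Lebesgue measure at most $2\pi-4\varepsilon$. Then $$\int_0^{2\pi}\lvert b(\alpha)\cap U(\alpha)\rvert\,\mathrm d\alpha \le 4\lvert b\rvert\cos\varepsilon .$$
   Context: For a set $X\subseteq\mathbb R^2$ and $\alpha\in[0,2\pi)$, $X(\alpha)=\{x\cos\alpha+y\sin\alpha:(x,y)\in X\}\subseteq\mathbb R$ is the projection of $X$ onto the line through the origin at angle $\alpha$; $\lvert\cdot\rvert$ on subsets of $\mathbb R$ is Lebesgue measure, and $\lvert b\rvert$ is the length of the segment $b$. *)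

From mathcomp Require Import all_boot all_order all_algebra.
From mathcomp Require Import all_classical all_reals all_analysis.
Set Implicit Arguments. Unset Strict Implicit. Unset Printing Implicit Defensive.
Import Order.TTheory GRing.Theory Num.Theory.
Local Open Scope classical_set_scope.
Local Open Scope ring_scope.

Definition dproj {R : realType} (X : set (R * R)) (a : R) : set R :=
  [set p.1 * cos a + p.2 * sin a | p in X].

Definition convex2 {R : realType} (U : set (R * R)) : Prop :=
  forall p q t, U p -> U q -> 0 <= t <= 1 ->
    U ((1 - t) * p.1 + t * q.1, (1 - t) * p.2 + t * q.2).

Definition segment {R : realType} (p q : R * R) : set (R * R) :=
  [set ((1 - t) * p.1 + t * q.1, (1 - t) * p.2 + t * q.2) | t in `[0, 1]].

Definition seglen {R : realType} (p q : R * R) : R :=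
  Num.sqrt ((q.1 - p.1) ^+ 2 + (q.2 - p.2) ^+ 2).

From mathcomp Require Import all_boot all_order all_algebra.
From mathcomp Require Import all_classical all_reals all_analysis.
From mathcomp Require Import ring lra.
Import Order.TTheory GRing.Theory Num.Theory.
Import numFieldNormedType.Exports HBNNSimple measurable_realfun.
Local Open Scope classical_set_scope.
Local Open Scope ring_scope.

(** Write [b = [p, q]] and [q - p = r (cos θ, sin θ)] with [r = |b|].  The
    projection [b(α)] is an interval of length [r |cos (α - θ)|], and
    [b(α) ∩ U(α)] is empty unless [α ∈ A].  Split
    [r |cos (α - θ)| <= r max (|cos (α - θ)| - sin ε, 0) + r sin ε]: the first
    term integrates over a full period to [r (4 cos ε - (2π - 4ε) sin ε)], and
    the second one, integrated over [A], contributes at most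
    [r (2π - 4ε) sin ε]. *)

Section measure_bounds.
Context {R : realType}.
Notation mu := (@lebesgue_measure R).

Lemma lebesgue_measure_dproj_segmentI (p q : R * R) (X : set R) (a : R) :
  (mu (dproj (segment p q) a `&` X) <=
   `|(q.1 - p.1) * cos a + (q.2 - p.2) * sin a|%:E)%E.
Proof.
set u := p.1 * cos a + p.2 * sin a; set v := q.1 * cos a + q.2 * sin a.
have -> : (q.1 - p.1) * cos a + (q.2 - p.2) * sin a = v - u by rewrite /u /v; ring.
have sub_itv : dproj (segment p q) a `&` X `<=` `[Num.min u v, Num.max u v].
  move=> _ [[_ [t t01 <-] <-] _]; move: t01; rewrite /= !in_itv /= => /andP[t0 t1].
  have -> : ((1 - t) * p.1 + t * q.1) * cos a + ((1 - t) * p.2 + t * q.2) * sin a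
     = (1 - t) * u + t * v by rewrite /u /v; ring.
  by case: (leP u v) => uv; apply/andP; split; nra.
apply: (@le_trans _ _ (mu `[Num.min u v, Num.max u v])); first exact: le_mu_ext.
rewrite lebesgue_measure_itv /=; case: ifPn => _; last by rewrite lee_fin.
rewrite -EFinD lee_fin.
case: (leP u v) => uv; first by rewrite ger0_norm ?subr_ge0.
by rewrite ltr0_norm ?subr_lt0 // opprB.
Qed.

Lemma lebesgue_measure_le_null_diff (B N A : set R) :
  measurable B -> measurable N -> mu N = 0%E -> B `\` N `<=` A -> (mu B <= mu A)%E.
Proof.
move=> mB mN N0 BNA.
have mBN : measurable (B `\` N) by exact: measurableD.
apply: (@le_trans _ _ (mu (B `\` N `|` N))).
  apply: le_measure; rewrite ?inE; [exact: mB | exact: measurableU |].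
  by move=> x Bx; have [Nx|Nx] := pselect (N x); [right | left].
apply: (le_trans (measureU2 mu mBN mN)).
rewrite [X in (_ + X)%E](_ : _ = 0%E) ?adde0//.
exact: le_mu_ext.
Qed.

Lemma ge0_integral_le_indic {D S : set R} {h g : R -> R} {K : R} :
  measurable D -> measurable S -> 0 <= K ->
  (forall x, D x -> 0 <= h x) -> measurable_fun D h ->
  (forall x, 0 <= g x) -> measurable_fun D g ->
  (forall x, D x -> h x <= g x + K * \1_S x) ->
  (\int[mu]_(x in D) (h x)%:E <=
   \int[mu]_(x in D) (g x)%:E + K%:E * mu (S `&` D))%E.
Proof.
move=> mD mS K0 h0 mh g0 mg hgS.
have h0E x : D x -> (0 <= (h x)%:E)%E by move=> Dx; rewrite lee_fin h0.
have g0E x : D x -> (0 <= (g x)%:E)%E by move=> _; rewrite lee_fin.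
have ind0 x : D x -> (0 <= (\1_S x)%:E :> \bar R)%E by move=> _; rewrite lee_fin.
have Kind0 x : D x -> (0 <= K%:E * (\1_S x)%:E)%E.
  by move=> Dx; rewrite mule_ge0 ?ind0 ?lee_fin.
have mhE : measurable_fun D (EFin \o h) by exact/measurable_EFinP.
have mgE : measurable_fun D (EFin \o g) by exact/measurable_EFinP.
have mind : measurable_fun D (fun x => (\1_S x)%:E : \bar R).
  by apply/measurable_EFinP; exact: measurable_indic.
have mKind : measurable_fun D (fun x => K%:E * (\1_S x)%:E)%E.
  by apply: emeasurable_funM => //; exact: measurable_cst.
have msum := emeasurable_funD mgE mKind.
have hgSE x : D x -> ((h x)%:E <= (g x)%:E + K%:E * (\1_S x)%:E)%E.
  by move=> Dx; rewrite -EFinM -EFinD lee_fin hgS.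
apply: (@le_trans _ _ (\int[mu]_(x in D) ((g x)%:E + K%:E * (\1_S x)%:E))%E).
  exact: ge0_le_integral.
by rewrite ge0_integralD // ge0_integralZl ?lee_fin // integral_indic.
Qed.

(* [A] need not be measurable: the integral of [f] is a supremum over simple
   functions [h], and each of them exceeds [g] only on a measurable set that
   lies in [A] up to [N]. *)
Lemma ge0_integral_le_excess {D A N : set R} {f : R -> \bar R} {g : R -> R}
    {K : R} :
  measurable D -> measurable N -> mu N = 0%E -> 0 <= K ->
  (forall x, 0 <= g x) -> measurable_fun setT g -> (forall x, (0 <= f x)%E) ->
  (forall x, D x -> (f x <= (g x + K)%:E)%E) ->
  (forall x, D x -> ~ A x -> ~ N x -> (f x <= (g x)%:E)%E) ->
  (\int[mu]_(x in D) f x <= \int[mu]_(x in D) (g x)%:E + K%:E * mu A)%E.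
Proof.
move=> mD mN N0 K0 g0 mg f0 fgK fg.
rewrite ge0_integralE//; apply: ge_ereal_sup => _ [h /= hf <-].
have hf' x : D x -> ((h x)%:E <= f x)%E.
  by move=> Dx; have := hf x; rewrite /patch mem_set.
have hD x : ~ D x -> h x = 0.
  move=> nDx; apply/eqP; rewrite eq_le fun_ge0 andbT -lee_fin.
  by have := hf x; rewrite /patch; case: ifPn => //; rewrite inE.
pose S := [set x | g x < h x].
have mS : measurable S.
  have mhg : measurable_fun setT (fun x => h x - g x) by exact: measurable_funB.
  have := mhg measurableT _ (measurable_itv `]0, +oo[); rewrite setTI.
  suff -> : S = (fun x => h x - g x) @^-1` `]0, +oo[ by [].
  by apply/seteqP; split => x; rewrite /S /= in_itv /= andbT subr_gt0.
have hgS x : D x -> h x <= g x + K * \1_S x.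
  move=> Dx; rewrite /indic; case: (boolP (x \in S)) => xS.
    by rewrite mulr1 -lee_fin (le_trans (hf' x Dx)) ?fgK.
  by rewrite mulr0 addr0 leNgt; apply/negP; move: xS; rewrite notin_setE.
have SD_A : (mu (S `&` D) <= mu A)%E.
  apply: (@lebesgue_measure_le_null_diff (S `&` D) N A);
    [exact: measurableI | exact: mN | exact: N0 |].
  move=> x [[Sx Dx] Nx]; apply: contrapT => Ax; have := fg x Dx Ax Nx.
  by rewrite leNgt (lt_le_trans _ (hf' x Dx)) // lte_fin.
rewrite -integralT_nnsfun.
have -> : (\int[mu]_x (h x)%:E = \int[mu]_(x in D) (h x)%:E)%E.
  rewrite [RHS]integral_mkcond; apply: eq_integral => x _.
  by rewrite /patch; case: ifPn => // /negP; rewrite inE => /hD ->.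
have h0 x : D x -> 0 <= h x by move=> _; exact: fun_ge0.
have mhD := measurable_funTS (D := D) (@measurable_funPT _ _ _ _ h).
have mgD := measurable_funTS (D := D) mg.
apply: le_trans (ge0_integral_le_indic mD mS K0 h0 mhD g0 mgD hgS) _.
by apply: leeD2l; apply: lee_wpmul2l; rewrite ?lee_fin.
Qed.

End measure_bounds.

Section increments.
Context {R : realType}.

Lemma increment_eq_of_is_derive {F G f : R -> R} {a b : R} : a <= b ->
  (forall x, a <= x <= b -> is_derive x 1 F (f x)) ->
  (forall x, a <= x <= b -> is_derive x 1 G (f x)) ->
  F b - F a = G b - G a.
Proof.
move=> ab dF dG.
have dFG x : a <= x <= b -> is_derive x 1 (fun y => F y - G y) 0.
  by move=> xab; have := is_deriveB (dF x xab) (dG x xab); rewrite subrr.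
have := @MVT_segment R (fun y => F y - G y) (fun=> 0) a b ab.
case.
- move=> x; rewrite in_itv /= => /andP[ax xb].
  by apply: dFG; rewrite !ltW.
- apply: continuous_in_subspaceT => x; rewrite inE /= in_itv /= => xab.
  apply/differentiable_continuous/derivable1_diffP.
  exact: (@ex_derive _ _ _ _ _ _ _ (dFG x xab)).
- by move=> c _; rewrite mul0r => /eqP; rewrite subr_eq0 => /eqP E; lra.
Qed.

End increments.

Section cos_excess.
Context {R : realType}.
Notation mu := (@lebesgue_measure R).

Lemma le_cos_pi (x y : R) : 0 <= x -> x <= y -> y <= pi -> cos y <= cos x.
Proof.
move=> x0 xy ypi.
have xI : x \in `[0, pi] by rewrite in_itv /= x0 (le_trans xy ypi).
have yI : y \in `[0, pi] by rewrite in_itv /= (le_trans x0 xy) ypi.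
by rewrite leNgt ltr_cos // -leNgt.
Qed.

Lemma cos_pihalfB (e : R) : cos (pi / 2 - e) = sin e.
Proof. by rewrite -cosN opprB cosBpihalf. Qed.

Definition cos_excess (s t : R) : R := Num.max (`|cos t| - s) 0.

Lemma cos_excess_ge0 s t : 0 <= cos_excess s t.
Proof. by rewrite /cos_excess le_max lexx orbT. Qed.

Lemma norm_cos_le_excess s t : `|cos t| <= cos_excess s t + s.
Proof. by rewrite -lerBlDr /cos_excess le_max lexx. Qed.

Lemma continuous_cos_excess s : continuous (cos_excess s).
Proof.
move=> x; apply: (@continuous_max _ _ (fun x => `|cos x| - s) (fun=> 0)).
  apply: continuousB; last exact: cst_continuous.
  by apply: continuous_comp; [exact: continuous_cos | exact: norm_continuous].
exact: cst_continuous.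
Qed.

Lemma continuous_scaled_cos_excess s r th :
  continuous (fun x => r * cos_excess s (x - th)).
Proof.
move=> x; apply: (@continuousM _ _ (fun=> r) (fun y => cos_excess s (y - th))).
  exact: cst_continuous.
apply: (@continuous_comp _ _ _ (fun y => y - th) (cos_excess s)).
  by apply: (@continuousB _ _ _ idfun (fun=> th)); [exact: cvg_id | exact: cst_continuous].
exact: continuous_cos_excess.
Qed.

Lemma cos_excessDpi s : periodic (cos_excess s) pi.
Proof. by move=> t; rewrite /cos_excess cosDpi normrN. Qed.

Lemma cos_excess_inner e x : 0 <= e <= pi / 2 -> `|x| <= pi / 2 - e ->
  cos_excess (sin e) x = cos x - sin e.
Proof.
move=> /andP[e0 e2] xw; have pi0 := pi_gt0 R.
have sin_le_cos : sin e <= cos x.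
  rewrite -cos_norm -cos_pihalfB; apply: le_cos_pi => //; lra.
have sin_ge0 : 0 <= sin e by apply: sin_ge0_pi; apply/andP; split; lra.
rewrite /cos_excess ger0_norm; last exact: le_trans sin_le_cos.
by apply/max_idPl; rewrite subr_ge0.
Qed.

Lemma cos_excess_outer e x : 0 <= e <= pi / 2 -> pi / 2 - e <= x <= pi / 2 + e ->
  cos_excess (sin e) x = 0.
Proof.
move=> /andP[e0 e2] /andP[x1 x2]; have pi0 := pi_gt0 R.
rewrite /cos_excess; apply/max_idPr; rewrite subr_le0 ler_norml.
apply/andP; split.
  by rewrite -cosDpihalf addrC; apply: le_cos_pi; lra.
by rewrite -cos_pihalfB; apply: le_cos_pi; lra.
Qed.

(* Any base point below [-3 pi] would do. *)
Definition cos_excess_prim (s x : R) : R :=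
  (\int[mu]_(t in [set` `[- 4 * pi, x]]) cos_excess s t)%R.

Lemma is_derive_cos_excess_prim s t : - 4 * pi < t ->
  is_derive t 1 (cos_excess_prim s) (cos_excess s t).
Proof.
move=> tgt.
have t1 : t < t + 1 by rewrite ltrDl.
have int : mu.-integrable `[- 4 * pi, t + 1] (EFin \o cos_excess s).
  apply: continuous_compact_integrable; first exact: segment_compact.
  by apply: continuous_subspaceT; exact: continuous_cos_excess.
have [d1 d2] := @continuous_FTC1_closed R (cos_excess s) (- 4 * pi) t (t + 1)
  t1 int tgt (continuous_cos_excess s t).
by apply: DeriveDef => //; rewrite -derive1E.
Qed.

Lemma is_derive_cos_excess_prim_shift s c x : - 4 * pi < x + c ->
  is_derive x 1 (fun y => cos_excess_prim s (y + c)) (cos_excess s (x + c)).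
Proof.
move=> xc.
have dshift : is_derive x 1 (fun y : R => y + c) 1.
  by apply: trigger_derive; rewrite addr0.
have := @is_derive1_comp R (cos_excess_prim s) (fun y => y + c) x _ _
  (is_derive_cos_excess_prim s (x + c) xc) dshift.
by rewrite mulr1.
Qed.

Lemma cos_excess_prim_Dpi s y z : - 3 * pi <= y -> - 3 * pi <= z ->
  cos_excess_prim s (y + pi) - cos_excess_prim s y =
  cos_excess_prim s (z + pi) - cos_excess_prim s z.
Proof.
wlog yz : y z / y <= z.
  move=> wlogH y3 z3; case: (leP y z) => [yz|/ltW zy]; first exact: wlogH.
  exact/esym/wlogH.
move=> y3 z3; have pi0 := pi_gt0 R.
have dF x : y <= x <= z ->
    is_derive x 1 (fun x => cos_excess_prim s (x + pi)) (cos_excess s x).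
  move=> /andP[yx _]; rewrite -(cos_excessDpi s x).
  by apply: is_derive_cos_excess_prim_shift; lra.
have dG x : y <= x <= z -> is_derive x 1 (cos_excess_prim s) (cos_excess s x).
  by move=> /andP[yx _]; apply: is_derive_cos_excess_prim; lra.
by have /= := increment_eq_of_is_derive yz dF dG; lra.
Qed.

Lemma cos_excess_prim_half_period e : 0 <= e <= pi / 2 ->
  cos_excess_prim (sin e) pi - cos_excess_prim (sin e) 0 =
  2 * cos e - (pi - 2 * e) * sin e.
Proof.
move=> he; have /andP[e0 e2] := he; have pi0 := pi_gt0 R.
set w := pi / 2 - e; have wE : w = pi / 2 - e by [].
have period_shift : cos_excess_prim (sin e) pi - cos_excess_prim (sin e) 0 =
    cos_excess_prim (sin e) (pi - w) - cos_excess_prim (sin e) (- w).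
  have -> : pi - w = - w + pi by rewrite addrC.
  by rewrite (cos_excess_prim_Dpi (sin e) (- w) 0) ?add0r //; lra.
have inner : cos_excess_prim (sin e) w - cos_excess_prim (sin e) (- w) =
    (sin w - sin e * w) - (sin (- w) - sin e * (- w)).
  apply: (increment_eq_of_is_derive (G := fun x => sin x - sin e * x)
    (f := cos_excess (sin e))); first lra.
    by move=> x /andP[wx _]; apply: is_derive_cos_excess_prim; lra.
  move=> x /andP[wx xw]; rewrite cos_excess_inner //; last first.
    by rewrite ler_norml; apply/andP; split; lra.
  by apply: trigger_derive; rewrite /GRing.scale /=; ring.
have outer : cos_excess_prim (sin e) (pi - w) - cos_excess_prim (sin e) w = 0 - 0.
  apply: (increment_eq_of_is_derive (G := fun=> 0) (f := cos_excess (sin e)));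
    first lra.
    by move=> x /andP[wx _]; apply: is_derive_cos_excess_prim; lra.
  move=> x /andP[wx xw]; rewrite cos_excess_outer //; last first.
    by apply/andP; split; lra.
  exact: is_derive_cst.
have sin_w : sin w = cos e by rewrite /w -opprB sinN sinBpihalf opprK.
rewrite period_shift; move: inner outer; rewrite sinN sin_w /w; lra.
Qed.

Lemma integral_cos_excess_shift s r th : 0 <= th <= 2 * pi ->
  (\int[mu]_(x in `[0%R, (2 * pi)%R]) (r * cos_excess s (x - th))%:E =
   (r * (cos_excess_prim s (2 * pi - th) - cos_excess_prim s (- th)))%:E)%E.
Proof.
move=> /andP[th0 th2]; have pi0 := pi_gt0 R.
pose F x := r * cos_excess_prim s (x - th).
have dF (x : R) : 0 <= x -> is_derive x 1 F (r * cos_excess s (x - th)).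
  move=> x0; have xth : - 4 * pi < x + - th by lra.
  exact: (@is_deriveZ R R R _ r x 1 _
    (is_derive_cos_excess_prim_shift s (- th) x xth)).
have cF (x : R) : 0 <= x -> {for x, continuous F}.
  move=> x0; apply/differentiable_continuous/derivable1_diffP.
  exact: (@ex_derive _ _ _ _ _ _ _ (dF x x0)).
rewrite (@continuous_FTC2 _ _ F 0 (2 * pi)).
- by rewrite -EFinB /F sub0r mulrBr.
- lra.
- by apply: continuous_subspaceT; exact: continuous_scaled_cos_excess.
- split.
  + move=> x; rewrite in_itv /= => /andP[x0 _].
    exact: (@ex_derive _ _ _ _ _ _ _ (dF x (ltW x0))).
  + by apply: cvg_at_right_filter; apply: cF.
  + by apply: cvg_at_left_filter; apply: cF; lra.
- move=> x; rewrite in_itv /= => /andP[x0 _].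
  by rewrite derive1E; exact: (@derive_val _ _ _ _ _ _ _ (dF x (ltW x0))).
Qed.

Lemma integral_cos_excess_period e r th : 0 <= e <= pi / 2 -> 0 <= th <= 2 * pi ->
  (\int[mu]_(x in `[0%R, (2 * pi)%R]) (r * cos_excess (sin e) (x - th))%:E =
   (r * (4 * cos e - (2 * pi - 4 * e) * sin e))%:E)%E.
Proof.
move=> he hth; have /andP[th0 th2] := hth; have pi0 := pi_gt0 R.
rewrite integral_cos_excess_shift //; congr EFin.
have first_half : cos_excess_prim (sin e) (pi - th) - cos_excess_prim (sin e) (- th) =
    cos_excess_prim (sin e) pi - cos_excess_prim (sin e) 0.
  have -> : pi - th = - th + pi by rewrite addrC.
  by rewrite (cos_excess_prim_Dpi (sin e) (- th) 0) ?add0r //; lra.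
have second_half :
    cos_excess_prim (sin e) (2 * pi - th) - cos_excess_prim (sin e) (pi - th) =
    cos_excess_prim (sin e) pi - cos_excess_prim (sin e) 0.
  have -> : 2 * pi - th = (pi - th) + pi by ring.
  by rewrite (cos_excess_prim_Dpi (sin e) (pi - th) 0) ?add0r //; lra.
have -> : cos_excess_prim (sin e) (2 * pi - th) - cos_excess_prim (sin e) (- th) =
    2 * (cos_excess_prim (sin e) pi - cos_excess_prim (sin e) 0) by lra.
by rewrite cos_excess_prim_half_period //; ring.
Qed.

End cos_excess.

Section polar.
Context {R : realType}.

Lemma polar_coordinates (u1 u2 : R) : exists2 th : R, 0 <= th <= 2 * pi &
  u1 = Num.sqrt (u1 ^+ 2 + u2 ^+ 2) * cos th /\
  u2 = Num.sqrt (u1 ^+ 2 + u2 ^+ 2) * sin th.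
Proof.
set r := Num.sqrt _; have pi0 := pi_gt0 R.
have r0 : 0 <= r by exact: sqrtr_ge0.
have rr : r ^+ 2 = u1 ^+ 2 + u2 ^+ 2 by rewrite sqr_sqrtr// addr_ge0// sqr_ge0.
have [r_eq0|r_neq0] := eqVneq r 0.
  have [-> ->] : u1 = 0 /\ u2 = 0 by move: rr; rewrite r_eq0 expr0n /=; nra.
  by exists 0; [lra | rewrite r_eq0 !mul0r].
have r_gt0 : 0 < r by rewrite lt_def r_neq0.
set x := u1 / r.
have x1 : -1 <= x <= 1.
  have : x ^+ 2 <= 1.
    by rewrite /x expr_div_n ler_pdivrMr ?exprn_gt0// mul1r rr lerDl sqr_ge0.
  by move=> hx; apply/andP; split; nra.
have cos_acos : r * cos (acos x) = u1.
  by rewrite acosK ?inE ?in_itv //= /x mulrC divfK.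
have sin_acos_eq : r * Num.sqrt (1 - x ^+ 2) = `|u2|.
  have -> : 1 - x ^+ 2 = (u2 / r) ^+ 2.
    rewrite /x !expr_div_n; apply: (mulIf (_ : r ^+ 2 != 0)); first by rewrite expf_neq0.
    by rewrite mulrBl !divfK ?expf_neq0// mul1r rr; ring.
  by rewrite sqrtr_sqr normrM (ger0_norm (_ : 0 <= r^-1)) ?invr_ge0 // mulrCA divff ?mulr1.
have a0 := acos_ge0 x1; have api := acos_lepi x1.
have [u2_ge0|u2_lt0] := leP 0 u2.
  exists (acos x); first by apply/andP; split; lra.
  by rewrite sin_acos // sin_acos_eq ger0_norm.
exists (- acos x + pi *+ 2); first by apply/andP; split; rewrite mulr2n; lra.
rewrite cosD2pi cosN sinD2pi sinN sin_acos // mulrN sin_acos_eq ltr0_norm //.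
by rewrite opprK.
Qed.

Lemma seglen_polar (p q : R * R) : exists2 th : R, 0 <= th <= 2 * pi &
  forall a, `|(q.1 - p.1) * cos a + (q.2 - p.2) * sin a| =
            seglen p q * `|cos (a - th)|.
Proof.
have [th th02 [u1E u2E]] := polar_coordinates (q.1 - p.1) (q.2 - p.2).
rewrite -/(seglen p q) in u1E u2E.
exists th => // a; rewrite [in LHS]u1E [in LHS]u2E cosB.
rewrite -[seglen p q in RHS]ger0_norm ?sqrtr_ge0 // -normrM; congr `|_|; ring.
Qed.

End polar.

Section bathtub.
Context {R : realType}.
Notation mu := (@lebesgue_measure R).

Lemma integral_le_cos_bathtub (f : R -> \bar R) (A : set R) (r th e : R) :
  0 <= r -> 0 <= th <= 2 * pi -> 0 <= e <= pi / 2 ->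
  (mu A <= (2 * pi - 4 * e)%:E)%E -> (forall x, (0 <= f x)%E) ->
  (forall x, 0 <= x <= 2 * pi -> (f x <= (r * `|cos (x - th)|)%:E)%E) ->
  (forall x, 0 <= x < 2 * pi -> ~ A x -> f x = 0%E) ->
  (\int[mu]_(x in `[0%R, (2 * pi)%R]) f x <= (4 * r * cos e)%:E)%E.
Proof.
move=> r0 th02 he muA f0 f_le f_eq0.
have /andP[e0 e2] := he; have pi0 := pi_gt0 R.
have s0 : 0 <= sin e by apply: sin_ge0_pi; apply/andP; split; lra.
pose H x := r * cos_excess (sin e) (x - th).
have mH : measurable_fun setT H.
  by apply: continuous_measurable_fun; exact: continuous_scaled_cos_excess.
have near_bound x : [set` `[0, 2 * pi]] x -> (f x <= (H x + r * sin e)%:E)%E.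
  rewrite /= in_itv /= => x02; apply: le_trans (f_le x x02) _.
  by rewrite lee_fin -mulrDr ler_wpM2l ?norm_cos_le_excess.
have far_bound x : [set` `[0, 2 * pi]] x -> ~ A x -> ~ [set 2 * pi] x ->
    (f x <= (H x)%:E)%E.
  move=> + nAx nx2; rewrite /= in_itv /= => /andP[x0 x2]; rewrite f_eq0 //.
    by rewrite lee_fin mulr_ge0 ?cos_excess_ge0.
  by rewrite x0 lt_neqAle x2 andbT; apply/eqP => x2pi; exact: nx2.
apply: le_trans (ge0_integral_le_excess (measurable_itv _) (measurable_set1 _)
  (lebesgue_measure_set1 _) (mulr_ge0 r0 s0) _ mH f0 near_bound far_bound) _.
  by move=> x; rewrite mulr_ge0 ?cos_excess_ge0.
rewrite integral_cos_excess_period //.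
apply: (@le_trans _ _ ((r * (4 * cos e - (2 * pi - 4 * e) * sin e))%:E +
  (r * sin e)%:E * (2 * pi - 4 * e)%:E)%E).
  by apply: leeD2l; apply: lee_wpmul2l => //; rewrite lee_fin mulr_ge0.
by rewrite -EFinM -EFinD lee_fin le_eqVlt; apply/orP; left; apply/eqP; ring.
Qed.

End bathtub.

Theorem lemma4 (R : realType) (U : set (R * R)) (p q : R * R) (eps : R) :
  convex2 U ->
  segment p q `&` U = set0 ->
  0 <= eps ->
  (lebesgue_measure
     [set a : R | (0 <= a < 2 * pi)%R /\ dproj U a `&` dproj (segment p q) a !=set0]
   <= (2 * pi - 4 * eps)%:E)%E ->
  (\int[lebesgue_measure]_(a in `[0%R, (2 * pi)%R]%classic)
      lebesgue_measure (dproj (segment p q) a `&` dproj U a)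
   <= (4 * seglen p q * cos eps)%:E)%E.
Proof.
move=> _ _ e0 hA.
have he : 0 <= eps <= pi / 2.
  have := le_trans (measure_ge0 lebesgue_measure _) hA.
  by rewrite lee_fin e0; have := pi_gt0 R; lra.
have [th th02 proj_len] := seglen_polar p q.
apply: (integral_le_cos_bathtub _ _ (seglen p q) th eps (sqrtr_ge0 _) th02 he hA).
- by move=> a; exact: measure_ge0.
- by move=> a _; rewrite -proj_len; exact: lebesgue_measure_dproj_segmentI.
- move=> a a02 nAa; rewrite -[RHS](measure0 lebesgue_measure); congr (_ _).
  apply: contrapT => /eqP/set0P ne; apply: nAa; split => //.
  by rewrite setIC.
Qed.
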